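(* Let $k\geq 3$ be an integer, $\sigma=\begin{pmatrix}\frac13&0\\0&\frac23\end{pmatrix}$, and $D_1=\sigma\otimes\frac{I_3}{3}\otimes\frac{I_k}{k}\in M_{6k}$. There exists an extreme point of the convex set $\mathcal{CP}(M_{6k},M_{6k};D_1,D_1)$ with Choi rank $8k$.
   Context: $M_n$ denotes the complex $n\times n$ matrices. For positive semidefinite $A\in M_{d_1}$, $B\in M_{d_2}$, $\mathcal{CP}(M_{d_1},M_{d_2};A,B)$ is the convex set of completely positive maps $\Phi:M_{d_1}\to M_{d_2}$ with $\Phi(I_{d_1})=B$ and $\Phi^*(I_{d_2})=A$ ($\Phi^*$ the Hilbert–Schmidt adjoint); equivalently $\Phi(X)=\sum_iK_iXK_i^\dagger$ with $\sum_iK_i^\dagger K_i=A$, $\sum_iK_iK_i^\dagger=B$. An extreme point of a convex set $\mathcal{K}$ is an element not expressible as $t\Phi_1+(1-t)\Phi_2$ with $t\in(0,1)$ and distinct $\Phi_1,\Phi_2\in\mathcal{K}$. The Choi rank of $\Phi$ is the rank of $\sum_{r,s}E_{rs}\otimes\Phi(E_{rs})$. *)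

From HB Require Import structures.
From mathcomp Require Import all_boot all_order all_algebra.
From mathcomp Require Import complex mxtens.
From mathcomp Require Import reals.
Set Implicit Arguments. Unset Strict Implicit. Unset Printing Implicit Defensive.
Import Order.TTheory GRing.Theory Num.Theory.
Local Open Scope ring_scope.

Section QDefs.
Variable C : numClosedFieldType.

Definition adjmx m n (A : 'M[C]_(m, n)) : 'M[C]_(n, m) := (map_mx Num.conj A)^T.

(* a (linear) map M_d1 -> M_d2 is completely positive iff it has a Kraus form
   Phi(X) = sum_i K_i X K_i^dagger  (finite family of Kraus operators) *)
Definition krausmap d1 d2 (K : seq 'M[C]_(d2, d1)) (X : 'M[C]_d1) : 'M[C]_d2 :=
  \sum_(M <- K) (M *m X *m adjmx M).

Definition is_CP d1 d2 (Phi : 'M[C]_d1 -> 'M[C]_d2) : Prop :=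
  exists K : seq 'M[C]_(d2, d1), Phi =1 krausmap K.

(* Phi^*(Y) = Z for the Hilbert-Schmidt adjoint Phi^*:
   <Y, Phi X>_HS = <Z, X>_HS for all X, with <A,B>_HS = tr(A^dagger B). *)
Definition HSadj_at d1 d2 (Phi : 'M[C]_d1 -> 'M[C]_d2) (Y : 'M[C]_d2) (Z : 'M[C]_d1) : Prop :=
  forall X : 'M[C]_d1, \tr (adjmx Y *m Phi X) = \tr (adjmx Z *m X).

Definition CPset d1 d2 (A : 'M[C]_d1) (B : 'M[C]_d2) (Phi : 'M[C]_d1 -> 'M[C]_d2) : Prop :=
  is_CP Phi /\ Phi 1%:M = B /\ HSadj_at Phi 1%:M A.

(* extreme point of a convex set of maps (given as a predicate);
   0 < t < 1 in a numClosedField forces t to be real *)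
Definition extreme_point d1 d2 (S : ('M[C]_d1 -> 'M[C]_d2) -> Prop)
    (Phi : 'M[C]_d1 -> 'M[C]_d2) : Prop :=
  S Phi /\
  ~ (exists (t : C) (Phi1 Phi2 : 'M[C]_d1 -> 'M[C]_d2),
        [/\ 0 < t < 1, S Phi1, S Phi2, Phi1 <> Phi2 &
            forall X, Phi X = t *: Phi1 X + (1 - t) *: Phi2 X]).

Definition choi d1 d2 (Phi : 'M[C]_d1 -> 'M[C]_d2) : 'M[C]_(d1 * d2) :=
  \sum_(r < d1) \sum_(s < d1) (delta_mx r s *t Phi (delta_mx r s)).

Definition choi_rank d1 d2 (Phi : 'M[C]_d1 -> 'M[C]_d2) : nat := \rank (choi Phi).

End QDefs.

Definition sigma_mx (C : numClosedFieldType) : 'M[C]_2 :=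
  \matrix_(i < 2, j < 2) (if i == j then (if i == 0 :> nat then 3^-1 else 2 / 3) else 0).

Definition D1 (C : numClosedFieldType) (k : nat) : 'M[C]_(2 * 3 * k) :=
  (sigma_mx C *t ((3 : C)^-1 *: (1%:M : 'M[C]_3))) *t ((k%:R : C)^-1 *: (1%:M : 'M[C]_k)).

From HB Require Import structures.
From mathcomp Require Import all_boot all_order all_algebra.
From mathcomp Require Import complex mxtens.
From mathcomp Require Import reals.
From mathcomp Require Import ring zify.
From Stdlib Require Import FunctionalExtensionality.
Set Implicit Arguments. Unset Strict Implicit. Unset Printing Implicit Defensive.
Import Order.TTheory GRing.Theory Num.Theory.
Local Open Scope ring_scope.

(* A CP map with Kraus operators K_1, ..., K_r is an extreme point of
   CP(A, B) as soon as the matrices K_i K_j^* (+) K_j^* K_i are linearly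
   independent.  Indeed, if it equals t Phi1 + (1 - t) Phi2, positivity of the
   Choi matrices puts the Kraus operators of Phi1 in the span of the K_i, so
   that Phi1 - Phi = sum_ij S_ij K_i X K_j^*; the two marginal conditions
   Phi1(1) = Phi(1) and Phi1^*(1) = Phi^*(1) then force S = 0.  This
   independence survives tensor products as soon as one factor A has both
   families {A_a A_a'^*} and {A_a'^* A_a} linearly independent.  For D_1 we
   take the 8k operators mu gamma_a (x) theta_b (x) thetak_c built from two
   2x2 matrices gamma_a with Gram sums 9 sigma, four 3x3 matrices theta_b with
   Gram sums 6 I_3 (their independence is certified by explicit integer left
   inverses), and the k matrices thetak_c, whose Gram sums are
   (k^2 + 4k - 4) I_k and whose Gram families are independent once k >= 3.
   Being linearly independent, the 8k Kraus operators give Choi rank 8k. *)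

Arguments mxtens_index {m n}.
Arguments mxtens_unindex {m n}.

Section AdjointTensor.
Variable C : numClosedFieldType.

Lemma adjmxE m n (A : 'M[C]_(m, n)) i j : adjmx A i j = (A j i)^*.
Proof. by rewrite /adjmx !mxE. Qed.

Lemma adjmxK m n (A : 'M[C]_(m, n)) : adjmx (adjmx A) = A.
Proof. by apply/matrixP=> i j; rewrite !adjmxE conjCK. Qed.

Lemma adjmx1 n : adjmx (1%:M : 'M[C]_n) = 1%:M.
Proof. by apply/matrixP=> i j; rewrite adjmxE !mxE conjC_nat eq_sym. Qed.

Lemma adjmxZ m n a (A : 'M[C]_(m, n)) : adjmx (a *: A) = a^* *: adjmx A.
Proof. by apply/matrixP=> i j; rewrite !adjmxE !mxE rmorphM. Qed.

Lemma adjmxM m n p (A : 'M[C]_(m, n)) (B : 'M[C]_(n, p)) :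
  adjmx (A *m B) = adjmx B *m adjmx A.
Proof.
apply/matrixP=> i j; rewrite adjmxE !mxE rmorph_sum; apply: eq_bigr => l _.
by rewrite !adjmxE rmorphM mulrC.
Qed.

Lemma adjmx_sum m n I (r : seq I) (P : pred I) (F : I -> 'M[C]_(m, n)) :
  adjmx (\sum_(i <- r | P i) F i) = \sum_(i <- r | P i) adjmx (F i).
Proof.
apply/matrixP=> i j; rewrite adjmxE !summxE rmorph_sum.
by apply: eq_bigr => l _; rewrite adjmxE.
Qed.

Lemma adjmx_tens m1 n1 m2 n2 (A : 'M[C]_(m1, n1)) (B : 'M[C]_(m2, n2)) :
  adjmx (A *t B) = adjmx A *t adjmx B.
Proof. by rewrite /adjmx map_mxT trmx_tens. Qed.

Lemma tensmxZl m n p q (a : C) (A : 'M[C]_(m, n)) (B : 'M[C]_(p, q)) :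
  (a *: A) *t B = a *: (A *t B).
Proof. by apply/matrixP => x y; rewrite !mxE mulrA. Qed.

Lemma tensmxZr m n p q (a : C) (A : 'M[C]_(m, n)) (B : 'M[C]_(p, q)) :
  A *t (a *: B) = a *: (A *t B).
Proof. by apply/matrixP => x y; rewrite !mxE mulrCA. Qed.

End AdjointTensor.

Section KrausSpan.
Variable C : numClosedFieldType.

Definition kraus_seq r m n (f : 'I_r -> 'M[C]_(m, n)) := map f (enum 'I_r).

Lemma krausmapE r m n (f : 'I_r -> 'M[C]_(m, n)) X :
  krausmap (kraus_seq f) X = \sum_i f i *m X *m adjmx (f i).
Proof. by rewrite /krausmap /kraus_seq big_map big_enum. Qed.

Definition hsdot m n (w M : 'M[C]_(m, n)) :=
  \sum_(p : 'I_m * 'I_n) (w p.1 p.2)^* * M p.1 p.2.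

(* [choi_form w Phi] is [vec(w)^* (choi Phi) vec(w)], up to the ordering of
   the indices; it is nonnegative for completely positive [Phi]. *)
Definition choi_form m n (w : 'M[C]_(m, n)) (Phi : 'M[C]_n -> 'M[C]_m) :=
  \sum_(pq : ('I_m * 'I_n) * ('I_m * 'I_n))
     (w pq.1.1 pq.1.2)^* * Phi (delta_mx pq.1.2 pq.2.2) pq.1.1 pq.2.1
     * w pq.2.1 pq.2.2.

Lemma eq_choi_form m n w (F G : 'M[C]_n -> 'M[C]_m) :
  F =1 G -> choi_form w F = choi_form w G.
Proof. by move=> FG; apply: eq_bigr => pq _; rewrite FG. Qed.

Lemma choi_form_lin m n w (F G : 'M[C]_n -> 'M[C]_m) s u :
  choi_form w (fun X => s *: F X + u *: G X) = s * choi_form w F + u * choi_form w G.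
Proof.
rewrite /choi_form !mulr_sumr -big_split; apply: eq_bigr => pq _ /=.
by rewrite !mxE; ring.
Qed.

Lemma sandwich_delta m n (M : 'M[C]_(m, n)) b b' a a' :
  (M *m delta_mx b b' *m adjmx M) a a' = M a b * (M a' b')^*.
Proof.
have Mdelta y : (M *m delta_mx b b') a y = M a b * (y == b')%:R.
  rewrite !mxE (bigD1 b) //= big1 => [|x /negbTE xb]; last by rewrite !mxE xb mulr0.
  by rewrite !mxE eqxx addr0.
rewrite !mxE (bigD1 b') //= big1 => [|y /negbTE yb]; last by rewrite Mdelta yb mulr0 mul0r.
by rewrite Mdelta eqxx mulr1 addr0 adjmxE.
Qed.

Lemma choi_form_sandwich m n w (M : 'M[C]_(m, n)) :
  choi_form w (fun X => M *m X *m adjmx M) = hsdot w M * (hsdot w M)^*.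
Proof.
rewrite /choi_form /hsdot rmorph_sum mulr_suml.
under [RHS]eq_bigr do rewrite mulr_sumr.
rewrite [RHS]pair_big /=; apply: eq_bigr => -[p q] _ /=.
by rewrite sandwich_delta rmorphM /= conjCK; ring.
Qed.

Lemma choi_form_kraus m n w (L : seq 'M[C]_(m, n)) :
  choi_form w (krausmap L) = \sum_(M <- L) hsdot w M * (hsdot w M)^*.
Proof.
elim: L => [|M L IHL].
  rewrite big_nil /choi_form big1 // => pq _.
  by rewrite /krausmap big_nil mxE mulr0 mul0r.
rewrite big_cons -IHL -choi_form_sandwich /choi_form -big_split.
by apply: eq_bigr => pq _ /=; rewrite /krausmap big_cons mxE; ring.
Qed.

Lemma choi_form_kraus_ge0 m n w (L : seq 'M[C]_(m, n)) :
  0 <= choi_form w (krausmap L).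
Proof. by rewrite choi_form_kraus; apply: sumr_ge0 => M _; apply: mul_conjC_ge0. Qed.

Lemma choi_form_kraus_eq0 m n w (L : seq 'M[C]_(m, n)) M :
  choi_form w (krausmap L) = 0 -> M \in L -> hsdot w M = 0.
Proof.
rewrite choi_form_kraus => /eqP; rewrite psumr_eq0 => [/allP LM ML|N _]; last first.
  exact: mul_conjC_ge0.
by move: (LM M ML); rewrite mulf_eq0 conjC_eq0 orbb => /eqP.
Qed.

Lemma sum_mxvec_index m n (F : 'I_(m * n) -> C) :
  \sum_x F x = \sum_(p : 'I_m * 'I_n) F (mxvec_index p.1 p.2).
Proof.
rewrite (reindex (uncurry (@mxvec_index m n))) /=; last exact: curry_mxvec_bij.
by apply: eq_bigr => -[a b].
Qed.

Lemma hsorth_span r m n (f : 'I_r -> 'M[C]_(m, n)) (L : 'M[C]_(m, n)) :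
  (forall w, (forall i, hsdot w (f i) = 0) -> hsdot w L = 0) ->
  exists c : 'I_r -> C, L = \sum_i c i *: f i.
Proof.
move=> orthL; pose F : 'M[C]_(r, m * n) := \matrix_(i, j) mxvec (f i) 0 j.
have /submxP [D defL] : (mxvec L <= F)%MS.
  rewrite submxE; apply/eqP/matrixP => z j; rewrite [z]ord1 !mxE.
  pose w : 'M[C]_(m, n) := \matrix_(a, b) (cokermx F (mxvec_index a b) j)^*.
  have hsdot_coker M : hsdot w M = \sum_x mxvec M 0 x * cokermx F x j.
    rewrite sum_mxvec_index /hsdot; apply: eq_bigr => p _.
    by rewrite !mxE conjCK mxvecE mulrC.
  rewrite -hsdot_coker; apply: orthL => i; rewrite hsdot_coker.
  transitivity ((F *m cokermx F) i j); last by rewrite mulmx_coker mxE.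
  by rewrite [RHS]mxE; apply: eq_bigr => x _; rewrite [F _ _]mxE.
exists (fun i => D 0 i); apply/matrixP => a b.
rewrite -(mxvecE L) defL !mxE summxE; apply: eq_bigr => i _.
by rewrite !mxE mxvecE.
Qed.

Lemma lincomb_sandwich r m n (f : 'I_r -> 'M[C]_(m, n)) (c : 'I_r -> C) X :
  (\sum_i c i *: f i) *m X *m adjmx (\sum_j c j *: f j)
  = \sum_i \sum_j (c i * (c j)^*) *: (f i *m X *m adjmx (f j)).
Proof.
rewrite adjmx_sum !mulmx_suml; apply: eq_bigr => i _.
rewrite mulmx_sumr; apply: eq_bigr => j _.
by rewrite adjmxZ -!scalemxAl -scalemxAr scalerA mulrC.
Qed.

Lemma adj_lincomb_mul r m n (f : 'I_r -> 'M[C]_(m, n)) (c : 'I_r -> C) :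
  adjmx (\sum_j c j *: f j) *m (\sum_i c i *: f i)
  = \sum_i \sum_j (c i * (c j)^*) *: (adjmx (f j) *m f i).
Proof.
rewrite adjmx_sum mulmx_sumr; apply: eq_bigr => i _.
rewrite mulmx_suml; apply: eq_bigr => j _.
by rewrite adjmxZ -scalemxAl -scalemxAr scalerA mulrC.
Qed.

Lemma krausmap_span r m n (f : 'I_r -> 'M[C]_(m, n)) (L : seq 'M[C]_(m, n)) :
  (forall M, M \in L -> exists c : 'I_r -> C, M = \sum_i c i *: f i) ->
  exists T : 'M[C]_r, forall X,
    krausmap L X = \sum_i \sum_j T i j *: (f i *m X *m adjmx (f j)).
Proof.
elim: L => [|M L IHL] Lspan.
  exists 0 => X; rewrite /krausmap big_nil; symmetry.
  by apply: big1 => i _; apply: big1 => j _; rewrite mxE scale0r.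
have [|T defL] := IHL; first by move=> N NL; apply: Lspan; rewrite inE NL orbT.
have [c ->] := Lspan M (mem_head _ _).
exists (T + \matrix_(i, j) (c i * (c j)^*)) => X.
rewrite /krausmap big_cons -/(krausmap L X) defL lincomb_sandwich addrC -big_split.
apply: eq_bigr => i _; rewrite -big_split; apply: eq_bigr => j _.
by rewrite !mxE scalerDl.
Qed.

End KrausSpan.

(** * Extreme points of CP(A, B) *)

Section GramFamilies.
Variable C : numClosedFieldType.

Definition mx_free2 r m n (P : 'I_r -> 'I_r -> 'M[C]_(m, n)) :=
  forall S : 'M[C]_r, \sum_i \sum_j S i j *: P i j = 0 -> S = 0.

Definition lgram_free r m n (f : 'I_r -> 'M[C]_(m, n)) :=
  mx_free2 (fun i j => f i *m adjmx (f j)).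

Definition rgram_free r m n (f : 'I_r -> 'M[C]_(m, n)) :=
  mx_free2 (fun i j => adjmx (f j) *m f i).

Definition lgram r m n (f : 'I_r -> 'M[C]_(m, n)) := \sum_i f i *m adjmx (f i).

Definition rgram r m n (f : 'I_r -> 'M[C]_(m, n)) := \sum_i adjmx (f i) *m f i.

Definition gram_free r m n (f : 'I_r -> 'M[C]_(m, n)) := forall S : 'M[C]_r,
  \sum_i \sum_j S i j *: (f i *m adjmx (f j)) = 0 ->
  \sum_i \sum_j S i j *: (adjmx (f j) *m f i) = 0 -> S = 0.

Lemma kraus_CPset r m n (f : 'I_r -> 'M[C]_(m, n)) :
  CPset (rgram f) (lgram f) (krausmap (kraus_seq f)).
Proof.
split; first by exists (kraus_seq f).
split; first by rewrite krausmapE; apply: eq_bigr => i _; rewrite mulmx1.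
move=> X; rewrite adjmx1 mul1mx krausmapE adjmx_sum mulmx_suml !raddf_sum.
by apply: eq_bigr => i _; rewrite adjmxM adjmxK /= mxtrace_mulC mulmxA.
Qed.

End GramFamilies.

Section Extreme.
Variable C : numClosedFieldType.

Lemma mx_eq0_trace n (Y : 'M[C]_n) : (forall X, \tr (Y *m X) = 0) -> Y = 0.
Proof.
move=> trY0; apply/matrixP => i j; rewrite mxE -(trY0 (delta_mx j i)).
rewrite /mxtrace (bigD1 i) //= big1 => [|l /negbTE li]; last first.
  by rewrite mxE big1 // => l' _; rewrite mxE li andbF mulr0.
rewrite mxE (bigD1 j) //= big1 => [|l /negbTE lj]; last by rewrite mxE lj mulr0.
by rewrite mxE !eqxx mulr1 !addr0.
Qed.

Lemma sum_scale_mx1 (V : lmodType C) r (G : 'I_r -> 'I_r -> V) :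
  \sum_i \sum_j (1%:M : 'M[C]_r) i j *: G i j = \sum_i G i i.
Proof.
apply: eq_bigr => i _; rewrite (bigD1 i) //= big1 => [|j ji]; last first.
  by rewrite mxE eq_sym (negbTE ji) scale0r.
by rewrite mxE eqxx scale1r addr0.
Qed.

Section Decomposition.
Variables (r m n : nat) (f : 'I_r -> 'M[C]_(m, n)).
Variables (Phi1 Phi2 : 'M[C]_n -> 'M[C]_m) (t : C).
Hypotheses (t_gt0 : 0 < t) (t_lt1 : t < 1).
Hypothesis decomp : forall X, krausmap (kraus_seq f) X = t *: Phi1 X + (1 - t) *: Phi2 X.

(* Since [Phi2] is CP, [t Phi1 <= krausmap f] in the Choi order, so every
   [w] killed by the Choi form of [krausmap f] is killed by that of [Phi1]. *)
Lemma kraus_span_of_decomp L1 : Phi1 =1 krausmap L1 -> is_CP Phi2 ->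
  forall M, M \in L1 -> exists c : 'I_r -> C, M = \sum_i c i *: f i.
Proof.
move=> defPhi1 [L2 defPhi2] M ML1; apply: hsorth_span => w orth_w.
have form_f0 : choi_form w (krausmap (kraus_seq f)) = 0.
  by rewrite choi_form_kraus /kraus_seq big_map big1 // => i _; rewrite orth_w mul0r.
have : t * choi_form w (krausmap L1) + (1 - t) * choi_form w (krausmap L2) = 0.
  rewrite -form_f0 -choi_form_lin; apply: eq_choi_form => X.
  by rewrite decomp defPhi1 defPhi2.
move/eqP; rewrite paddr_eq0 ?mulr_ge0 ?(ltW t_gt0) ?subr_ge0 ?(ltW t_lt1) ?choi_form_kraus_ge0 //.
case/andP; rewrite mulf_eq0 (gt_eqF t_gt0) /= => /eqP form_L1 _.
exact: choi_form_kraus_eq0 form_L1 ML1.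
Qed.

Lemma kraus_decomp_eq A B : gram_free f ->
  CPset A B (krausmap (kraus_seq f)) -> CPset A B Phi1 -> is_CP Phi2 ->
  Phi1 =1 krausmap (kraus_seq f).
Proof.
move=> free_f [_ [f_unital f_trace]] [[L1 defPhi1] [Phi1_unital Phi1_trace]] CP2.
have [T defL1] := krausmap_span (kraus_span_of_decomp defPhi1 CP2).
pose S := T - 1%:M.
have diff X : Phi1 X - krausmap (kraus_seq f) X
    = \sum_i \sum_j S i j *: (f i *m X *m adjmx (f j)).
  rewrite defPhi1 defL1 krausmapE.
  rewrite -(sum_scale_mx1 (fun i j => f i *m X *m adjmx (f j))) -sumrB.
  apply: eq_bigr => i _.
  by rewrite -sumrB; apply: eq_bigr => j _; rewrite -scalerBl !mxE.
have S_unital : \sum_i \sum_j S i j *: (f i *m adjmx (f j)) = 0.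
  have := diff 1%:M; rewrite Phi1_unital f_unital subrr => S_1; rewrite [RHS]S_1.
  by apply: eq_bigr => i _; apply: eq_bigr => j _; rewrite mulmx1.
have S_trace : \sum_i \sum_j S i j *: (adjmx (f j) *m f i) = 0.
  apply: mx_eq0_trace => X.
  have tr_diff : \tr (Phi1 X - krausmap (kraus_seq f) X) = 0.
    have := Phi1_trace X; rewrite -f_trace adjmx1 !mul1mx.
    by rewrite raddfB /= => ->; rewrite subrr.
  rewrite -{}tr_diff diff mulmx_suml !raddf_sum; apply: eq_bigr => i _.
  rewrite mulmx_suml !raddf_sum; apply: eq_bigr => j _.
  by rewrite -scalemxAl /= !mxtraceZ [in RHS]mxtrace_mulC mulmxA.
move=> X; apply/eqP; rewrite -subr_eq0 diff (free_f S S_unital S_trace).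
by apply/eqP/big1 => i _; apply: big1 => j _; rewrite mxE scale0r.
Qed.

End Decomposition.

Lemma kraus_extreme r m n (f : 'I_r -> 'M[C]_(m, n)) A B :
  gram_free f -> CPset A B (krausmap (kraus_seq f)) ->
  extreme_point (CPset A B) (krausmap (kraus_seq f)).
Proof.
move=> free_f CPf; split=> // -[t [Phi1 [Phi2 [/andP [t_gt0 t_lt1] CP1 CP2 neq decomp]]]].
have t'_gt0 : 0 < 1 - t by rewrite subr_gt0.
have t'_lt1 : 1 - t < 1 by rewrite ltrBlDr ltrDl.
have decomp' X : krausmap (kraus_seq f) X = (1 - t) *: Phi2 X + (1 - (1 - t)) *: Phi1 X.
  by rewrite decomp subKr addrC.
have eq1 := kraus_decomp_eq t_gt0 t_lt1 decomp free_f CPf CP1 (proj1 CP2).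
have eq2 := kraus_decomp_eq t'_gt0 t'_lt1 decomp' free_f CPf CP2 (proj1 CP1).
by apply: neq; apply: functional_extensionality => X; rewrite eq1 eq2.
Qed.

End Extreme.

(** * Tensor products, scaling and Choi rank *)

Section Tensor.
Variable C : numClosedFieldType.

Definition tens_fam r1 r2 m1 n1 m2 n2
    (A : 'I_r1 -> 'M[C]_(m1, n1)) (B : 'I_r2 -> 'M[C]_(m2, n2)) x :=
  A (mxtens_unindex x).1 *t B (mxtens_unindex x).2.

Lemma sum_mxtens_index (V : nmodType) r1 r2 (F : 'I_(r1 * r2) -> V) :
  \sum_x F x = \sum_i \sum_j F (mxtens_index (i, j)).
Proof.
rewrite pair_big /= (reindex (@mxtens_index r1 r2)) /=; last first.
  by exists mxtens_unindex => x _; rewrite ?mxtens_indexK ?mxtens_unindexK.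
by apply: eq_bigr => -[i j].
Qed.

Lemma exchange_big2 (V : nmodType) (I J : finType) (F : I -> I -> J -> J -> V) :
  \sum_i \sum_i' \sum_j \sum_j' F i i' j j' = \sum_j \sum_j' \sum_i \sum_i' F i i' j j'.
Proof.
rewrite pair_big [RHS]pair_big; under eq_bigr do rewrite pair_big.
by under [RHS]eq_bigr do rewrite pair_big; apply: exchange_big.
Qed.

Section TensorSum.
Variables (r1 r2 m1 n1 m2 n2 : nat) (S : 'M[C]_(r1 * r2)).
Variables (P : 'I_r1 -> 'I_r1 -> 'M[C]_(m1, n1)) (Q : 'I_r2 -> 'I_r2 -> 'M[C]_(m2, n2)).

Let Sb i j i' j' := S (mxtens_index (i, j)) (mxtens_index (i', j')).
Let tens_sum := \sum_x \sum_y S x y *: (P (mxtens_unindex x).1 (mxtens_unindex y).1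
                                       *t Q (mxtens_unindex x).2 (mxtens_unindex y).2).

Lemma tens_sum_entry p u q v :
  tens_sum (mxtens_index (p, u)) (mxtens_index (q, v))
  = \sum_i \sum_i' \sum_j \sum_j' Sb i j i' j' * P i i' p q * Q j j' u v.
Proof.
rewrite summxE sum_mxtens_index; apply: eq_bigr => i _.
under eq_bigr do rewrite summxE sum_mxtens_index.
rewrite exchange_big; apply: eq_bigr => i' _; apply: eq_bigr => j _.
by apply: eq_bigr => j' _; rewrite mxE !mxtens_indexK tensmxE mulrA.
Qed.

Lemma tens_sum_free_l : mx_free2 P -> tens_sum = 0 ->
  forall i i', \sum_j \sum_j' Sb i j i' j' *: Q j j' = 0.
Proof.
move=> freeP sum0; pose c u v : 'M[C]_r1 :=
  \matrix_(i, i') (\sum_j \sum_j' Sb i j i' j' *: Q j j') u v.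
suff c0 u v : c u v = 0.
  by move=> i i'; apply/matrixP => u v; have /matrixP/(_ i i') := c0 u v; rewrite !mxE.
apply: freeP; apply/matrixP => p q.
have := congr1 (fun M : 'M[C]_(m1 * m2, n1 * n2) =>
  M (mxtens_index (p, u)) (mxtens_index (q, v))) sum0.
rewrite /= tens_sum_entry !mxE => <-; rewrite summxE; apply: eq_bigr => i _.
rewrite summxE; apply: eq_bigr => i' _; rewrite !mxE summxE mulr_suml.
apply: eq_bigr => j _; rewrite summxE mulr_suml; apply: eq_bigr => j' _.
by rewrite !mxE; ring.
Qed.

Lemma tens_sum_free_r : mx_free2 Q -> tens_sum = 0 ->
  forall j j', \sum_i \sum_i' Sb i j i' j' *: P i i' = 0.
Proof.
move=> freeQ sum0; pose c p q : 'M[C]_r2 :=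
  \matrix_(j, j') (\sum_i \sum_i' Sb i j i' j' *: P i i') p q.
suff c0 p q : c p q = 0.
  by move=> j j'; apply/matrixP => p q; have /matrixP/(_ j j') := c0 p q; rewrite !mxE.
apply: freeQ; apply/matrixP => u v.
have := congr1 (fun M : 'M[C]_(m1 * m2, n1 * n2) =>
  M (mxtens_index (p, u)) (mxtens_index (q, v))) sum0.
rewrite /= tens_sum_entry exchange_big2 !mxE => <-; rewrite summxE; apply: eq_bigr => j _.
rewrite summxE; apply: eq_bigr => j' _; rewrite !mxE summxE mulr_suml.
apply: eq_bigr => i _; rewrite summxE mulr_suml; apply: eq_bigr => i' _.
by rewrite !mxE; ring.
Qed.

End TensorSum.

Section TensorFamily.
Variables (r1 r2 m1 n1 m2 n2 : nat).
Variables (A : 'I_r1 -> 'M[C]_(m1, n1)) (B : 'I_r2 -> 'M[C]_(m2, n2)).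

Lemma tens_fam_lprod x y :
  tens_fam A B x *m adjmx (tens_fam A B y)
  = (A (mxtens_unindex x).1 *m adjmx (A (mxtens_unindex y).1))
     *t (B (mxtens_unindex x).2 *m adjmx (B (mxtens_unindex y).2)).
Proof. by rewrite adjmx_tens tensmx_mul. Qed.

Lemma tens_fam_rprod x y :
  adjmx (tens_fam A B y) *m tens_fam A B x
  = (adjmx (A (mxtens_unindex y).1) *m A (mxtens_unindex x).1)
     *t (adjmx (B (mxtens_unindex y).2) *m B (mxtens_unindex x).2).
Proof. by rewrite adjmx_tens tensmx_mul. Qed.

Lemma lgram_tens : lgram (tens_fam A B) = lgram A *t lgram B.
Proof.
apply/matrixP => x y; case: (mxtens_indexP x) => p u; case: (mxtens_indexP y) => q v.
rewrite tensmxE !summxE mulr_sum; apply: eq_bigr => z _.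
by rewrite tens_fam_lprod tensmxE.
Qed.

Lemma rgram_tens : rgram (tens_fam A B) = rgram A *t rgram B.
Proof.
apply/matrixP => x y; case: (mxtens_indexP x) => p u; case: (mxtens_indexP y) => q v.
rewrite tensmxE !summxE mulr_sum; apply: eq_bigr => z _.
by rewrite tens_fam_rprod tensmxE.
Qed.

Lemma gram_free_tensl :
  lgram_free A -> rgram_free A -> gram_free B -> gram_free (tens_fam A B).
Proof.
move=> lfreeA rfreeA freeB S lsum0 rsum0.
have block i i' : \matrix_(j, j') S (mxtens_index (i, j)) (mxtens_index (i', j')) = 0.
  apply: freeB; under eq_bigr do under eq_bigr do rewrite mxE.
  - apply: (tens_sum_free_l lfreeA); rewrite -[RHS]lsum0.
    by apply: eq_bigr => x _; apply: eq_bigr => y _; rewrite tens_fam_lprod.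
  - apply: (tens_sum_free_l rfreeA); rewrite -[RHS]rsum0.
    by apply: eq_bigr => x _; apply: eq_bigr => y _; rewrite tens_fam_rprod.
apply/matrixP => x y; case: (mxtens_indexP x) => i j; case: (mxtens_indexP y) => i' j'.
by have /matrixP/(_ j j') := block i i'; rewrite !mxE.
Qed.

Lemma gram_free_tensr :
  gram_free A -> lgram_free B -> rgram_free B -> gram_free (tens_fam A B).
Proof.
move=> freeA lfreeB rfreeB S lsum0 rsum0.
have block j j' : \matrix_(i, i') S (mxtens_index (i, j)) (mxtens_index (i', j')) = 0.
  apply: freeA; under eq_bigr do under eq_bigr do rewrite mxE.
  - apply: (tens_sum_free_r lfreeB); rewrite -[RHS]lsum0.
    by apply: eq_bigr => x _; apply: eq_bigr => y _; rewrite tens_fam_lprod.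
  - apply: (tens_sum_free_r rfreeB); rewrite -[RHS]rsum0.
    by apply: eq_bigr => x _; apply: eq_bigr => y _; rewrite tens_fam_rprod.
apply/matrixP => x y; case: (mxtens_indexP x) => i j; case: (mxtens_indexP y) => i' j'.
by have /matrixP/(_ i i') := block j j'; rewrite !mxE.
Qed.

End TensorFamily.
End Tensor.

Section Scale.
Variable C : numClosedFieldType.
Variables (r m n : nat) (mu : C) (f : 'I_r -> 'M[C]_(m, n)).

Lemma scale_lprod i j :
  (mu *: f i) *m adjmx (mu *: f j) = (mu * mu^*) *: (f i *m adjmx (f j)).
Proof. by rewrite adjmxZ -scalemxAl -scalemxAr scalerA. Qed.

Lemma scale_rprod i j :
  adjmx (mu *: f j) *m (mu *: f i) = (mu * mu^*) *: (adjmx (f j) *m f i).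
Proof. by rewrite adjmxZ -scalemxAl -scalemxAr scalerA mulrC. Qed.

Lemma lgram_scale : lgram (fun i => mu *: f i) = (mu * mu^*) *: lgram f.
Proof. by rewrite /lgram scaler_sumr; apply: eq_bigr => i _; rewrite scale_lprod. Qed.

Lemma rgram_scale : rgram (fun i => mu *: f i) = (mu * mu^*) *: rgram f.
Proof. by rewrite /rgram scaler_sumr; apply: eq_bigr => i _; rewrite scale_rprod. Qed.

Lemma gram_free_scale : mu != 0 -> gram_free f -> gram_free (fun i => mu *: f i).
Proof.
move=> mu_neq0 freef S lsum0 rsum0.
have mu2_neq0 : mu * mu^* != 0 by rewrite mulf_neq0 ?conjC_eq0.
apply: freef; apply: (scalerI mu2_neq0); rewrite scaler0 scaler_sumr.
- rewrite -[RHS]lsum0; apply: eq_bigr => i _; rewrite scaler_sumr.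
  by apply: eq_bigr => j _; rewrite scale_lprod !scalerA mulrC.
- rewrite -[RHS]rsum0; apply: eq_bigr => i _; rewrite scaler_sumr.
  by apply: eq_bigr => j _; rewrite scale_rprod !scalerA mulrC.
Qed.

End Scale.

Section ChoiRank.
Variable C : numClosedFieldType.

Definition mx_free r m n (f : 'I_r -> 'M[C]_(m, n)) :=
  forall c : 'I_r -> C, \sum_i c i *: f i = 0 -> forall i, c i = 0.

Lemma gram_free_mx_free r m n (f : 'I_r -> 'M[C]_(m, n)) : gram_free f -> mx_free f.
Proof.
move=> freef c comb0 i.
have cc0 : (\matrix_(i, j) (c i * (c j)^*) : 'M[C]_r) = 0.
  apply: freef.
  - have := lincomb_sandwich f c 1%:M; rewrite comb0 !mul0mx => /esym cc.
    by rewrite -[RHS]cc; apply: eq_bigr => a _; apply: eq_bigr => b _; rewrite mxE mulmx1.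
  - have := adj_lincomb_mul f c; rewrite comb0 mulmx0 => /esym cc.
    by rewrite -[RHS]cc; apply: eq_bigr => a _; apply: eq_bigr => b _; rewrite mxE.
have /matrixP/(_ i i)/eqP := cc0; rewrite !mxE mulf_eq0 conjC_eq0 orbb.
by move/eqP.
Qed.

Lemma mul_adjmx_eq0 m n (A : 'M[C]_(m, n)) : A *m adjmx A = 0 -> A = 0.
Proof.
move=> AA0; apply/matrixP => i j; rewrite mxE; apply/eqP.
have /matrixP/(_ i i) := AA0; rewrite !mxE => /eqP.
rewrite psumr_eq0 => [/allP/(_ j (mem_index_enum j))|l _]; rewrite adjmxE.
  by rewrite mulf_eq0 conjC_eq0 orbb.
exact: mul_conjC_ge0.
Qed.

Lemma mxrank_mul_adjmx m n (A : 'M[C]_(m, n)) : \rank (A *m adjmx A) = \rank A.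
Proof.
apply/eqP; rewrite eqn_leq mxrankM_maxl /=.
have kerAA_sub : (kermx (A *m adjmx A) <= kermx A)%MS.
  apply/sub_kermxP/mul_adjmx_eq0; set K := kermx _.
  by rewrite adjmxM mulmxA -(mulmxA K) mulmx_ker mul0mx.
have := mxrankS kerAA_sub; rewrite !mxrank_ker.
have := rank_leq_row A; have := rank_leq_row (A *m adjmx A); lia.
Qed.

Definition choi_vec r m n (f : 'I_r -> 'M[C]_(m, n)) : 'M[C]_(n * m, r) :=
  \matrix_(x, i) f i (mxtens_unindex x).2 (mxtens_unindex x).1.

Lemma choi_kraus r m n (f : 'I_r -> 'M[C]_(m, n)) :
  choi (krausmap (kraus_seq f)) = choi_vec f *m adjmx (choi_vec f).
Proof.
apply/matrixP => x y; case: (mxtens_indexP x) => s a; case: (mxtens_indexP y) => s' a'.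
rewrite summxE (bigD1 s) //= [X in _ + X]big1 => [|s0 /negbTE s0s]; last first.
  by rewrite summxE big1 // => t _; rewrite tensmxE mxE (eq_sym s) s0s mul0r.
rewrite addr0 summxE (bigD1 s') //= [X in _ + X]big1 => [|t /negbTE ts']; last first.
  by rewrite tensmxE mxE (eq_sym s') ts' andbF mul0r.
rewrite tensmxE mxE !eqxx mul1r addr0 krausmapE summxE mxE.
by apply: eq_bigr => i _; rewrite sandwich_delta adjmxE !mxE !mxtens_indexK.
Qed.

Lemma choi_vec_rank r m n (f : 'I_r -> 'M[C]_(m, n)) : mx_free f -> \rank (choi_vec f) = r.
Proof.
move=> freef; apply/eqP; rewrite -mxrank_tr -[_ == r]/(row_free _) -kermx_eq0.
apply/eqP/row_matrixP => l; rewrite row0; set x := row l _.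
have xV0 : x *m (choi_vec f)^T = 0 by rewrite /x -row_mul mulmx_ker row0.
apply/rowP => i; rewrite [RHS]mxE; apply: (freef (fun j => x 0 j)); apply/matrixP => a b.
have /rowP/(_ (mxtens_index (b, a))) := xV0; rewrite !mxE => <-.
by rewrite summxE; apply: eq_bigr => j _; rewrite !mxE mxtens_indexK.
Qed.

Lemma choi_rank_kraus r m n (f : 'I_r -> 'M[C]_(m, n)) :
  mx_free f -> choi_rank (krausmap (kraus_seq f)) = r.
Proof. by move=> freef; rewrite /choi_rank choi_kraus mxrank_mul_adjmx choi_vec_rank. Qed.

End ChoiRank.

(** * The matrices thetak *)

Section ThetaK.
Variables (C : numClosedFieldType) (k : nat).
Local Notation kC := (k%:R : C).

Lemma sum_delta_mull (p : 'I_k) (G : 'I_k -> C) : \sum_b (p == b)%:R * G b = G p.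
Proof.
rewrite (bigD1 p) //= big1 => [|b /negbTE pb]; first by rewrite eqxx mul1r addr0.
by rewrite eq_sym pb mul0r.
Qed.

Lemma sum_delta_mulr (p : 'I_k) (G : 'I_k -> C) : \sum_b (b == p)%:R * G b = G p.
Proof. by rewrite -[RHS](sum_delta_mull p G); apply: eq_bigr => b _; rewrite eq_sym. Qed.

Lemma thetak_gram_scalar_gt0 : (0 < k)%N -> 0 < kC ^+ 2 + 4 * kC - 4.
Proof.
move=> k_gt0; have -> : kC ^+ 2 + 4 * kC - 4 = (k ^ 2 + 4 * k - 4)%:R.
  rewrite natrB; last by lia.
  by rewrite natrD natrM natrX.
by rewrite ltr0n; lia.
Qed.

Definition thetak (b : 'I_k) : 'M[C]_k := \matrix_(p, q)
  (2 * (p == b)%:R + 2 * (q == b)%:R - (kC + 2) * ((p == b)%:R * (q == b)%:R)).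

Lemma adjmx_thetak b : adjmx (thetak b) = thetak b.
Proof.
apply/matrixP => p q; rewrite adjmxE !mxE !(rmorphB, rmorphD, rmorphM) /= !conjC_nat.
by ring.
Qed.

Lemma thetak_mul b d p q : (thetak b *m thetak d) p q =
  4 * kC * ((p == b)%:R * (q == d)%:R)
  + 2 * (p == b)%:R * (2 - (kC + 2) * (q == d)%:R)
  + (2 - (kC + 2) * (p == b)%:R) * (2 * (q == d)%:R)
  + (b == d)%:R * ((2 - (kC + 2) * (p == b)%:R) * (2 - (kC + 2) * (q == d)%:R)).
Proof.
rewrite mxE (eq_bigr (fun y => 4 * ((p == b)%:R * (q == d)%:R)
   + (y == d)%:R * (2 * (p == b)%:R * (2 - (kC + 2) * (q == d)%:R))
   + (y == b)%:R * ((2 - (kC + 2) * (p == b)%:R) * (2 * (q == d)%:R))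
   + (y == b)%:R * ((y == d)%:R
       * ((2 - (kC + 2) * (p == b)%:R) * (2 - (kC + 2) * (q == d)%:R))))).
  by rewrite !big_split /= !sum_delta_mulr sumr_const card_ord -mulr_natl; ring.
by move=> y _; rewrite !mxE; ring.
Qed.

Lemma thetak_gram_entry (S : 'M[C]_k) p q :
  (\sum_b \sum_d S b d *: (thetak b *m adjmx (thetak d))) p q =
  -8 * S p q + 4 * (\sum_d S p d) + 4 * (\sum_b S b q) + 4 * (\sum_b S b b)
  - 2 * (kC + 2) * (S p p + S q q) + (kC + 2) ^+ 2 * ((p == q)%:R * S p p).
Proof.
rewrite summxE; transitivity (\sum_b (
     4 * (kC - (kC + 2)) * ((p == b)%:R * \sum_d (q == d)%:R * S b d)
   + 4 * ((p == b)%:R * \sum_d S b d) + 4 * \sum_d (q == d)%:R * S b d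
   + \sum_d (b == d)%:R * (S b d * ((2 - (kC + 2) * (p == b)%:R)
                                    * (2 - (kC + 2) * (q == d)%:R))))).
  apply: eq_bigr => b _; rewrite summxE !mulr_sumr -!big_split /=.
  by apply: eq_bigr => d _; rewrite mxE adjmx_thetak thetak_mul; ring.
transitivity (\sum_b (4 * (kC - (kC + 2)) * ((p == b)%:R * S b q)
   + 4 * ((p == b)%:R * \sum_d S b d) + 4 * S b q + 4 * S b b
   + (- 2 * (kC + 2)) * ((p == b)%:R * S b b) + (- 2 * (kC + 2)) * ((q == b)%:R * S b b)
   + (kC + 2) ^+ 2 * ((p == b)%:R * ((q == b)%:R * S b b)))).
  by apply: eq_bigr => b _; rewrite !sum_delta_mull; ring.
by rewrite !big_split /= -!mulr_sumr !sum_delta_mull [q == p]eq_sym; ring.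
Qed.

Lemma lgram_thetak : lgram thetak = (kC ^+ 2 + 4 * kC - 4) *: 1%:M.
Proof.
apply/matrixP => p q; rewrite summxE.
transitivity (\sum_b ((p == b)%:R * ((q == b)%:R * (kC ^+ 2 + 4 * kC - 4))
   + (p == b)%:R * (- 2 * kC) + (q == b)%:R * (- 2 * kC) + 4)).
  by apply: eq_bigr => b _; rewrite adjmx_thetak thetak_mul eqxx /=; ring.
rewrite !big_split /= !sum_delta_mull sumr_const card_ord -mulr_natl !mxE eq_sym.
by case: (p == q); ring.
Qed.

Lemma rgram_thetak : rgram thetak = (kC ^+ 2 + 4 * kC - 4) *: 1%:M.
Proof. by rewrite -lgram_thetak; apply: eq_bigr => b _; rewrite !adjmx_thetak. Qed.

End ThetaK.

Lemma eq0_lincomb2 (R : comPzRingType) (x e1 e2 c1 c2 : R) :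
  e1 = 0 -> e2 = 0 -> x = c1 * e1 + c2 * e2 -> x = 0.
Proof. by move=> -> -> ->; rewrite !mulr0 addr0. Qed.

Lemma eq0_lincomb3 (R : comPzRingType) (x e1 e2 e3 c1 c2 c3 : R) :
  e1 = 0 -> e2 = 0 -> e3 = 0 -> x = c1 * e1 + c2 * e2 + c3 * e3 -> x = 0.
Proof. by move=> -> -> -> ->; rewrite !mulr0 !addr0. Qed.

Section GramSystem.
Variables (C : numClosedFieldType) (k : nat) (S : 'M[C]_k).
Hypothesis k_gt2 : (2 < k)%N.
Local Notation kC := (k%:R : C).
Let r p := \sum_q S p q.
Let c q := \sum_p S p q.
Let tr := \sum_p S p p.
Let tot := \sum_p r p.

Let sum_col : \sum_q c q = tot.
Proof. exact: exchange_big. Qed.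

(* [gram_eq] is the entrywise form of [thetak_gram_entry] set to zero. *)
Hypothesis gram_eq : forall p q,
  -8 * S p q + 4 * r p + 4 * c q + 4 * tr
  - 2 * (kC + 2) * (S p p + S q q) + (kC + 2) ^+ 2 * ((p == q)%:R * S p p) = 0.

Lemma gram_row_eq p :
  (4 * kC - 8) * r p - (kC ^+ 2 - 4) * S p p + 4 * tot + (2 * kC - 4) * tr = 0.
Proof.
have := big1 (index_enum 'I_k) xpredT _ (fun q _ => gram_eq p q); move=> /(_ +%R).
rewrite !big_split /= sumrN -!mulr_sumr big_split /= !sumr_const card_ord.
rewrite (sum_delta_mull p (fun=> S p p)) sum_col => row_sum0.
by rewrite -[RHS]row_sum0 /r /tr; ring.
Qed.

Lemma gram_col_eq q :
  (4 * kC - 8) * c q - (kC ^+ 2 - 4) * S q q + 4 * tot + (2 * kC - 4) * tr = 0.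
Proof.
have := big1 (index_enum 'I_k) xpredT _ (fun p _ => gram_eq p q); move=> /(_ +%R).
rewrite !big_split /= sumrN -!mulr_sumr big_split /= !sumr_const card_ord.
rewrite (sum_delta_mulr q (fun p => S p p)) => col_sum0.
by rewrite -[RHS]col_sum0 /c /tr /tot /r; ring.
Qed.

Let kC2_neq0 : kC - 2 != 0.
Proof. by rewrite -(natrB _ (ltnW k_gt2)) pnatr_eq0 -lt0n subn_gt0. Qed.

Let kC4_neq0 : kC + 4 != 0.
Proof. by rewrite -natrD pnatr_eq0 addn4. Qed.

Let gram_scalar_neq0 : kC ^+ 2 + 4 * kC - 4 != 0.
Proof. by rewrite gt_eqF // thetak_gram_scalar_gt0 // (ltn_trans _ k_gt2). Qed.

Lemma gram_diag_eq p : (kC - 2) ^+ 2 * (kC + 4) * S p p = 8 * tot.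
Proof.
apply/eqP; rewrite -subr_eq0; apply/eqP.
apply: (eq0_lincomb3 (c1 := kC - 2) (c2 := -1) (c3 := -1) (gram_eq p p))
  (gram_row_eq p) (gram_col_eq p) _.
by rewrite eqxx /=; ring.
Qed.

Lemma gram_diag_const p p' : S p p = S p' p'.
Proof.
apply: (mulfI (_ : (kC - 2) ^+ 2 * (kC + 4) != 0)); last by rewrite !gram_diag_eq.
exact: mulf_neq0 (expf_neq0 _ kC2_neq0) kC4_neq0.
Qed.

Let kC48_neq0 : 4 * kC - 8 != 0.
Proof. by rewrite (_ : 4 * kC - 8 = 4 * (kC - 2)) ?mulf_neq0 ?pnatr_eq0 //; ring. Qed.

Lemma gram_row_const p p' : r p = r p'.
Proof.
apply: (mulfI kC48_neq0); apply/eqP; rewrite -subr_eq0; apply/eqP.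
apply: (eq0_lincomb2 (c1 := 1) (c2 := -1) (gram_row_eq p) (gram_row_eq p')).
by rewrite (gram_diag_const p' p); ring.
Qed.

Lemma gram_col_const q q' : c q = c q'.
Proof.
apply: (mulfI kC48_neq0); apply/eqP; rewrite -subr_eq0; apply/eqP.
apply: (eq0_lincomb2 (c1 := 1) (c2 := -1) (gram_col_eq q) (gram_col_eq q')).
by rewrite (gram_diag_const q' q); ring.
Qed.

Lemma gram_offdiag_const p q p' q' : p != q -> p' != q' -> S p q = S p' q'.
Proof.
move=> pq p'q'; apply: (mulfI (_ : -8 != 0)); first by rewrite oppr_eq0 pnatr_eq0.
apply/eqP; rewrite -subr_eq0; apply/eqP.
have := gram_eq p' q'; rewrite (gram_row_const p' p) (gram_col_const q' q).
rewrite (gram_diag_const p' p) (gram_diag_const q' q) (negbTE p'q') => off'.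
apply: (eq0_lincomb2 (c1 := 1) (c2 := -1) (gram_eq p q) off').
by rewrite (negbTE pq); ring.
Qed.

Lemma gram_system_eq0 : S = 0.
Proof.
have k_gt1 : (1 < k)%N by apply: ltnW.
pose i0 : 'I_k := Ordinal (ltnW k_gt1); pose i1 : 'I_k := Ordinal k_gt1.
have i01 : i0 != i1 by rewrite -val_eqE.
set s := S i0 i0; set o := S i0 i1.
have S_split p q : S p q = o + (p == q)%:R * (s - o).
  case: eqVneq => [<-|pq]; first by rewrite (gram_diag_const p i0) -/s /=; ring.
  by rewrite (gram_offdiag_const pq i01) -/o /=; ring.
have row0 : r i0 = s + (kC - 1) * o.
  rewrite /r (eq_bigr _ (fun q _ => S_split i0 q)) big_split /= sumr_const card_ord.
  by rewrite (sum_delta_mull i0 (fun=> s - o)) -mulr_natl; ring.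
have col1 : c i1 = s + (kC - 1) * o.
  rewrite /c (eq_bigr _ (fun p _ => S_split p i1)) big_split /= sumr_const card_ord.
  by rewrite (sum_delta_mulr i1 (fun=> s - o)) -mulr_natl; ring.
have diag_tr : tr = kC * s.
  rewrite /tr (eq_bigr _ (fun p _ => gram_diag_const p i0)) sumr_const card_ord.
  by rewrite mulr_natl.
have o0 : o = 0.
  have := gram_eq i0 i1; rewrite row0 col1 diag_tr (gram_diag_const i1 i0) -/s -/o.
  rewrite (negbTE i01) /= => off; have : 8 * (kC - 2) * o = 0 by rewrite -[RHS]off; ring.
  by move/eqP; rewrite !mulf_eq0 (negbTE kC2_neq0) pnatr_eq0 /= => /eqP.
have s0 : s = 0.
  have := gram_eq i0 i0; rewrite row0 (gram_col_const i0 i1) col1 diag_tr -/s o0 eqxx.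
  move=> diag; have : (kC ^+ 2 + 4 * kC - 4) * s = 0 by rewrite -[RHS]diag /=; ring.
  by move/eqP; rewrite mulf_eq0 (negbTE gram_scalar_neq0) => /eqP.
by apply/matrixP => p q; rewrite S_split o0 s0 mxE; ring.
Qed.

End GramSystem.

Section ThetaKFree.
Variables (C : numClosedFieldType) (k : nat).
Hypothesis k_gt2 : (2 < k)%N.

Lemma lgram_free_thetak : lgram_free (@thetak C k).
Proof.
move=> S gram0; apply: (gram_system_eq0 k_gt2) => p q.
by have := thetak_gram_entry S p q; rewrite gram0 mxE => /esym.
Qed.

Lemma rgram_free_thetak : rgram_free (@thetak C k).
Proof.
move=> S gram0; apply/trmx_inj; rewrite trmx0; apply: lgram_free_thetak.
rewrite -[RHS]gram0 exchange_big; apply: eq_bigr => i _; apply: eq_bigr => j _.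
by rewrite !mxE !adjmx_thetak.
Qed.

End ThetaKFree.

(** * Small Kraus families given by integer tables *)

Fixpoint isum (n : nat) (g : nat -> int) : int :=
  if n is n'.+1 then isum n' g + g n' else 0.

Definition tab_lprod (tab : nat -> nat -> nat -> int) n i j p q :=
  isum n (fun x => tab i p x * tab j q x).

Definition tab_rprod (tab : nat -> nat -> nat -> int) m i j p q :=
  isum m (fun x => tab j x p * tab i x q).

Definition lgram_coef tab m n e i j := tab_lprod tab n i j (e %/ m)%N (e %% m)%N.

Definition rgram_coef tab m n e i j := tab_rprod tab m i j (e %/ n)%N (e %% n)%N.

Definition gram_coef tab m n e i j :=
  if (e < m * m)%N then lgram_coef tab m n e i j else rgram_coef tab m n (e - m * m) i j.

(* [cert_check r a coef L d] says that [L] is [d] times a left inverse of the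
   [a x r^2] coefficient matrix [coef], so that the [a] linear forms
   [S |-> \sum_(i, j) S i j * coef e i j] jointly determine [S]. *)
Definition cert_check r a (coef : nat -> nat -> nat -> int) (L : seq (seq int)) d :=
  (d != 0) &&
  all (fun i0 => all (fun j0 => all (fun i => all (fun j =>
    isum a (fun e => nth 0 (nth [::] L (i0 * r + j0)%N) e * coef e i j)
      == (if (i == i0) && (j == j0) then d else 0)) (iota 0 r)) (iota 0 r)) (iota 0 r))
    (iota 0 r).

Definition tab_entry (T : seq (seq (seq int))) i p q := nth 0 (nth [::] (nth [::] T i) p) q.

Definition gamma_tab : seq (seq (seq int)) := [::
  [:: [:: 1; 0];
      [:: 0; 2]];
  [:: [:: 1; 1];
      [:: 1; -1]]]%Z.

Definition theta3_tab : seq (seq (seq int)) := [::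
  [:: [:: 1; 0; 0];
      [:: 0; 0; 2];
      [:: 0; 2; 0]];
  [:: [:: -2; 0; 0];
      [:: 0; 1; 0];
      [:: 0; 0; 0]];
  [:: [:: 0; 0; 0];
      [:: -1; 0; 0];
      [:: 0; 0; -1]];
  [:: [:: 0; 0; -1];
      [:: 0; 0; 0];
      [:: 0; -1; 0]]]%Z.

Lemma gamma_lcert : cert_check 2 4 (lgram_coef (tab_entry gamma_tab) 2 2)
  [:: [:: -2; 2; 2; 2];
      [:: 0; -2; 4; 0];
      [:: 0; 4; -2; 0];
      [:: 4; -2; -2; -1]]%Z 6.
Proof. by vm_compute. Qed.

Lemma gamma_rcert : cert_check 2 4 (rgram_coef (tab_entry gamma_tab) 2 2)
  [:: [:: -2; 2; 2; 2];
      [:: 0; 4; -2; 0];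
      [:: 0; -2; 4; 0];
      [:: 4; -2; -2; -1]]%Z 6.
Proof. by vm_compute. Qed.

Lemma theta3_cert : cert_check 4 18 (gram_coef (tab_entry theta3_tab) 3 3)
  [:: [:: 22; 24; 0; 24; 42; -8; 0; -8; -12; -30; 48; -4; 48; -10; 0; -4; 0; 0];
      [:: -72; -96; 0; -72; -72; 0; 60; 96; 0; 72; -192; 48; -144; 72; -60; 0; 0; 0];
      [:: 0; 24; 0; 0; 0; 0; -96; -96; 0; 0; 48; -48; 0; 0; 96; 0; 0; 0];
      [:: 36; 48; 0; 0; 36; 0; -48; -48; 0; -36; 96; -24; 0; -36; 48; 0; 0; 0];
      [:: -27; -12; 0; -36; -27; 36; -60; -60; 0; 27; -24; -30; -72; 27; 60; 18; 0; 0];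
      [:: -44; -48; 0; -48; -48; 16; 0; 16; -12; 60; -96; 8; -96; 56; 0; 8; 0; 0];
      [:: 0; 0; 0; 0; 0; 0; 0; 0; 0; 0; -72; 0; 0; 0; 0; 0; 0; 0];
      [:: -54; -72; 0; -72; -54; 0; 72; 72; 0; 54; -144; 36; -144; 54; -72; 36; 0; 0];
      [:: -72; -96; 0; -72; -72; 0; 96; 96; 0; 72; -192; 48; -144; 72; -96; 0; 0; 0];
      [:: 0; 0; 0; 0; 0; 0; 0; 0; 0; 0; 0; 0; -72; 0; 0; 0; 0; 0];
      [:: -44; -48; 0; -48; -48; 16; 0; 16; 60; 60; -96; 8; -96; -16; 0; 8; 0; 0];
      [:: 0; 0; 0; 0; 0; 0; 72; 0; 0; 0; 0; 0; 0; 0; 0; 0; 0; 0];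
      [:: 0; -48; 0; 0; 0; 0; 48; 48; 0; 0; -96; 24; 0; 0; -48; 0; 0; 0];
      [:: 0; 0; 0; 0; 0; 0; -72; -72; 0; 0; 0; 0; 0; 0; 72; 0; 0; 0];
      [:: 0; 0; 72; 0; 0; 0; 0; 0; 0; 0; 0; 0; 0; 0; 0; 0; 0; 0];
      [:: 28; -48; 0; -48; -48; 16; 0; 16; 60; -12; -96; 8; -96; -16; 0; 8; 0; 0]]%Z 72.
Proof. by vm_compute. Qed.

Section TableMatrices.
Variable C : numClosedFieldType.

Definition mx_of_tab m n (t : nat -> nat -> int) : 'M[C]_(m, n) := \matrix_(p, q) (t p q)%:~R.

Lemma isumE n g : ((isum n g)%:~R : C) = \sum_(x < n) (g x)%:~R.
Proof. by elim: n => [|n IHn]; rewrite ?big_ord0 // big_ord_recr /= intrD IHn. Qed.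

Lemma adjmx_tab m n t : adjmx (mx_of_tab m n t) = mx_of_tab n m (fun p q => t q p).
Proof. by apply/matrixP => p q; rewrite adjmxE !mxE conj_Creal // realz. Qed.

Lemma mulmx_tab m n p t1 t2 : mx_of_tab m n t1 *m mx_of_tab n p t2
  = mx_of_tab m p (fun a b => isum n (fun x => t1 a x * t2 x b)).
Proof.
by apply/matrixP => a b; rewrite !mxE isumE; apply: eq_bigr => x _; rewrite !mxE intrM.
Qed.

Lemma tab_lprodE r m n (tab : nat -> nat -> nat -> int) (i j : 'I_r) (p q : 'I_m) :
  (mx_of_tab m n (tab i) *m adjmx (mx_of_tab m n (tab j))) p q
  = (tab_lprod tab n i j p q)%:~R.
Proof. by rewrite adjmx_tab mulmx_tab mxE. Qed.

Lemma tab_rprodE r m n (tab : nat -> nat -> nat -> int) (i j : 'I_r) (p q : 'I_n) :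
  (adjmx (mx_of_tab m n (tab j)) *m mx_of_tab m n (tab i)) p q
  = (tab_rprod tab m i j p q)%:~R.
Proof. by rewrite adjmx_tab mulmx_tab mxE. Qed.

Lemma cert_check_sound r a coef L d (S : 'M[C]_r) : cert_check r a coef L d ->
  (forall e, (e < a)%N -> \sum_i \sum_j S i j * (coef e i j)%:~R = 0) -> S = 0.
Proof.
case/andP => d_neq0 /allP cert coef0; apply/matrixP => i0 j0; rewrite mxE.
pose l e := nth 0 (nth [::] L (i0 * r + j0)%N) e.
have certE (i j : 'I_r) :
    isum a (fun e => l e * coef e i j) = if (i == i0) && (j == j0) then d else 0.
  apply/eqP; move: (cert i0); rewrite mem_iota => /(_ (ltn_ord i0)) /allP /(_ j0).
  rewrite mem_iota => /(_ (ltn_ord j0)) /allP /(_ i); rewrite mem_iota => /(_ (ltn_ord i)).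
  by move=> /allP /(_ j); rewrite mem_iota => /(_ (ltn_ord j)).
apply: (mulfI (_ : (d%:~R : C) != 0)); first by rewrite intr_eq0.
rewrite mulr0; transitivity (\sum_(e < a) (l e)%:~R * \sum_i \sum_j S i j * (coef e i j)%:~R).
  symmetry; transitivity (\sum_i \sum_j S i j * (isum a (fun e => l e * coef e i j))%:~R).
    under eq_bigr do rewrite mulr_sumr; rewrite exchange_big; apply: eq_bigr => i _.
    under eq_bigr do rewrite mulr_sumr; rewrite exchange_big; apply: eq_bigr => j _.
    by rewrite isumE mulr_sumr; apply: eq_bigr => e _; rewrite intrM; ring.
  rewrite (bigD1 i0) //= [X in _ + X]big1 => [|i /negbTE ii0]; last first.
    by apply: big1 => j _; rewrite certE ii0 mulr0.
  rewrite addr0 (bigD1 j0) //= [X in _ + X]big1 => [|j /negbTE jj0]; last first.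
    by rewrite certE eqxx jj0 mulr0.
  by rewrite certE !eqxx addr0 mulrC.
by apply: big1 => e _; rewrite coef0 ?mulr0.
Qed.

Section Table.
Variables (r m n : nat) (tab : nat -> nat -> nat -> int).
Local Notation T i := (mx_of_tab m n (tab i)).

Lemma lgram_tab_coef0 (S : 'M[C]_r) :
  \sum_i \sum_j S i j *: (T i *m adjmx (T j)) = 0 ->
  forall e, (e < m * m)%N -> \sum_i \sum_j S i j * (lgram_coef tab m n e i j)%:~R = 0.
Proof.
move=> gram0 e e_lt; have m_gt0 : (0 < m)%N by case: m e_lt.
have p_lt : (e %/ m < m)%N by rewrite ltn_divLR.
have := congr1 (fun M : 'M[C]_m => M (Ordinal p_lt) (Ordinal (ltn_pmod e m_gt0))) gram0.
rewrite /= mxE summxE => entry0; rewrite -[RHS]entry0; apply: eq_bigr => i _.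
by rewrite summxE; apply: eq_bigr => j _; rewrite mxE tab_lprodE.
Qed.

Lemma rgram_tab_coef0 (S : 'M[C]_r) :
  \sum_i \sum_j S i j *: (adjmx (T j) *m T i) = 0 ->
  forall e, (e < n * n)%N -> \sum_i \sum_j S i j * (rgram_coef tab m n e i j)%:~R = 0.
Proof.
move=> gram0 e e_lt; have n_gt0 : (0 < n)%N by case: n e_lt.
have p_lt : (e %/ n < n)%N by rewrite ltn_divLR.
have := congr1 (fun M : 'M[C]_n => M (Ordinal p_lt) (Ordinal (ltn_pmod e n_gt0))) gram0.
rewrite /= mxE summxE => entry0; rewrite -[RHS]entry0; apply: eq_bigr => i _.
by rewrite summxE; apply: eq_bigr => j _; rewrite mxE tab_rprodE.
Qed.

Lemma lgram_free_tab L d : cert_check r (m * m) (lgram_coef tab m n) L d ->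
  lgram_free (fun i : 'I_r => T i).
Proof. by move=> cert S /lgram_tab_coef0; apply: cert_check_sound cert. Qed.

Lemma rgram_free_tab L d : cert_check r (n * n) (rgram_coef tab m n) L d ->
  rgram_free (fun i : 'I_r => T i).
Proof. by move=> cert S /rgram_tab_coef0; apply: cert_check_sound cert. Qed.

Lemma gram_free_tab L d : cert_check r (m * m + n * n) (gram_coef tab m n) L d ->
  gram_free (fun i : 'I_r => T i).
Proof.
move=> cert S /lgram_tab_coef0 lcoef0 /rgram_tab_coef0 rcoef0.
apply: (cert_check_sound cert) => e e_lt; rewrite /gram_coef.
by case: ltnP => [/lcoef0 //|e_ge]; apply: rcoef0; rewrite ltn_subLR.
Qed.

Lemma lgram_tab : lgram (fun i : 'I_r => T i)
  = mx_of_tab m m (fun p q => isum r (fun i => tab_lprod tab n i i p q)).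
Proof.
by apply/matrixP => p q; rewrite summxE mxE isumE; apply: eq_bigr => i _; rewrite tab_lprodE.
Qed.

Lemma rgram_tab : rgram (fun i : 'I_r => T i)
  = mx_of_tab n n (fun p q => isum r (fun i => tab_rprod tab m i i p q)).
Proof.
by apply/matrixP => p q; rewrite summxE mxE isumE; apply: eq_bigr => i _; rewrite tab_rprodE.
Qed.

End Table.

Lemma eq_mx_of_tab m n (t1 t2 : nat -> nat -> int) :
  all (fun p => all (fun q => t1 p q == t2 p q) (iota 0 n)) (iota 0 m) ->
  mx_of_tab m n t1 = mx_of_tab m n t2.
Proof.
move=> /allP t12; apply/matrixP => p q; rewrite !mxE.
move: (t12 p); rewrite mem_iota => /(_ (ltn_ord p)) /allP /(_ q).
by rewrite mem_iota => /(_ (ltn_ord q)) /eqP ->.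
Qed.

Definition gamma (i : 'I_2) : 'M[C]_2 := mx_of_tab 2 2 (tab_entry gamma_tab i).

Definition theta3 (i : 'I_4) : 'M[C]_3 := mx_of_tab 3 3 (tab_entry theta3_tab i).

Lemma gram_free_theta3 : gram_free theta3.
Proof. exact: (@gram_free_tab 4 3 3 _ _ _ theta3_cert). Qed.

Lemma lgram_free_gamma : lgram_free gamma.
Proof. exact: (@lgram_free_tab 2 2 2 _ _ _ gamma_lcert). Qed.

Lemma rgram_free_gamma : rgram_free gamma.
Proof. exact: (@rgram_free_tab 2 2 2 _ _ _ gamma_rcert). Qed.

Let sigma9_tab (p q : nat) : int := (p == q)%:Z * (3 + 3 * p%:Z).

Lemma sigma9_tabE : mx_of_tab 2 2 sigma9_tab = 9 *: sigma_mx C.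
Proof.
have three_neq0 : (3 : C) != 0 by rewrite pnatr_eq0.
apply/matrixP => p q; rewrite !mxE /sigma9_tab.
by case: p => [[|[|p]] ?] //; case: q => [[|[|q]] ?] //=; rewrite ?mulr0 //; field.
Qed.

Lemma lgram_gamma : lgram gamma = 9 *: sigma_mx C.
Proof. by rewrite lgram_tab -sigma9_tabE; apply: eq_mx_of_tab; vm_compute. Qed.

Lemma rgram_gamma : rgram gamma = 9 *: sigma_mx C.
Proof. by rewrite rgram_tab -sigma9_tabE; apply: eq_mx_of_tab; vm_compute. Qed.

Let scalar6_tab (p q : nat) : int := (p == q)%:Z * 6.

Lemma scalar6_tabE : mx_of_tab 3 3 scalar6_tab = 6 *: 1%:M.
Proof. by apply/matrixP => p q; rewrite !mxE /scalar6_tab intrM mulrC. Qed.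

Lemma lgram_theta3 : lgram theta3 = 6 *: 1%:M.
Proof. by rewrite lgram_tab -scalar6_tabE; apply: eq_mx_of_tab; vm_compute. Qed.

Lemma rgram_theta3 : rgram theta3 = 6 *: 1%:M.
Proof. by rewrite rgram_tab -scalar6_tabE; apply: eq_mx_of_tab; vm_compute. Qed.

End TableMatrices.

(** * The Kraus family of D_1 *)

Section Main.
Variables (C : numClosedFieldType) (k : nat).
Hypothesis k_gt2 : (2 < k)%N.
Local Notation kC := (k%:R : C).

Let k_gt0 : (0 < k)%N. Proof. exact: ltn_trans k_gt2. Qed.

Let gram_scalar_gt0 : 0 < kC ^+ 2 + 4 * kC - 4.
Proof. exact: thetak_gram_scalar_gt0. Qed.

Definition D1_scale : C := sqrtC (162 * kC * (kC ^+ 2 + 4 * kC - 4))^-1.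

Definition D1_kraus : 'I_(2 * 4 * k) -> 'M[C]_(2 * 3 * k) :=
  fun i => D1_scale *: tens_fam (tens_fam (gamma C) (theta3 C)) (@thetak C k) i.

Let D1_scale_norm : D1_scale * D1_scale^* = (162 * kC * (kC ^+ 2 + 4 * kC - 4))^-1.
Proof.
have norm_ge0 : 0 <= (162 * kC * (kC ^+ 2 + 4 * kC - 4))^-1.
  by rewrite invr_ge0 !mulr_ge0 ?ler0n ?(ltW gram_scalar_gt0).
rewrite conj_Creal; last by rewrite ger0_real // sqrtC_ge0.
by rewrite -expr2 sqrtCK.
Qed.

Lemma gram_free_D1_kraus : gram_free D1_kraus.
Proof.
apply: gram_free_scale.
  by rewrite sqrtC_eq0 invr_eq0 !mulf_neq0 ?pnatr_eq0 ?gt_eqF // -lt0n.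
have free_gamma_theta3 : gram_free (tens_fam (gamma C) (theta3 C)).
  apply: gram_free_tensl;
  [exact: lgram_free_gamma | exact: rgram_free_gamma | exact: gram_free_theta3].
apply: gram_free_tensr;
[exact: free_gamma_theta3 | exact: lgram_free_thetak | exact: rgram_free_thetak].
Qed.

Lemma D1E : D1 C k = (3 * kC)^-1 *: ((sigma_mx C *t 1%:M) *t 1%:M).
Proof. by rewrite /D1 !tensmxZr tensmxZl scalerA invfM mulrC. Qed.

Let D1_gram : (D1_scale * D1_scale^*) *:
  ((9 *: sigma_mx C) *t (6 *: 1%:M) *t ((kC ^+ 2 + 4 * kC - 4) *: 1%:M)) = D1 C k.
Proof.
rewrite D1_scale_norm !(tensmxZl, tensmxZr) !scalerA D1E; congr (_ *: _).
by field; rewrite pnatr_eq0 -lt0n k_gt0 (gt_eqF gram_scalar_gt0).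
Qed.

Lemma lgram_D1_kraus : lgram D1_kraus = D1 C k.
Proof. by rewrite lgram_scale !lgram_tens lgram_gamma lgram_theta3 lgram_thetak D1_gram. Qed.

Lemma rgram_D1_kraus : rgram D1_kraus = D1 C k.
Proof. by rewrite rgram_scale !rgram_tens rgram_gamma rgram_theta3 rgram_thetak D1_gram. Qed.

End Main.

Theorem mainTheorem10 (R : realType) (k : nat) (hk : (3 <= k)%N) :
  exists Phi : 'M[R[i]]_(2 * 3 * k) -> 'M[R[i]]_(2 * 3 * k),
    extreme_point (CPset (D1 R[i] k) (D1 R[i] k)) Phi /\
    choi_rank Phi = (8 * k)%N.
Proof.
have free_kraus := gram_free_D1_kraus (C := R[i]) hk.
exists (krausmap (kraus_seq (@D1_kraus R[i] k))); split.
  apply: kraus_extreme => //.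
  by rewrite -{1}(rgram_D1_kraus R[i] hk) -(lgram_D1_kraus R[i] hk); apply: kraus_CPset.
exact: choi_rank_kraus (gram_free_mx_free free_kraus).
Qed.
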